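(* Let $\Gamma:=\mathrm{Cos}(G,H,A)$ be a vertex-transitive graph and let $B$ be a subset of $A$. If every $\varphi\in\mathrm{Aut}(\Gamma)_H$ fixes the set $\{Hx\mid x\in B\}$ setwise, then every $\varphi\in\mathrm{Aut}(\Gamma)_H$ fixes the set $\{Hx\mid x\in\langle B\rangle\}$ setwise.
   Context: $G$ is a finite group, $H\le G$, and $A\subseteq G$ is a union of $(H,H)$-double cosets with $A=A^{-1}$. The coset graph $\mathrm{Cos}(G,H,A)$ has vertex set the right cosets of $H$ in $G$, with $Hx$ adjacent to $Hy$ iff $yx^{-1}\in A$ (i.e. $Hyx^{-1}H\subseteq HAH$). $\mathrm{Aut}(\Gamma)_H$ denotes the stabilizer in $\mathrm{Aut}(\Gamma)$ of the vertex $H$. *)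

From mathcomp Require Import all_boot all_fingroup.
Set Implicit Arguments. Unset Strict Implicit. Unset Printing Implicit Defensive.
Local Open Scope group_scope.

Section CosetGraph.
Variable gT : finGroupType.

Definition cos_vertices (G H : {set gT}) : {set {set gT}} := rcosets H G.

(* Hx ~ Hy iff y x^-1 \in A (well defined since A is a union of (H,H)-double
   cosets). *)
Definition cos_adj (G H A : {set gT}) (u v : {set gT}) : bool :=
  [exists x in G, exists y in G,
     [&& u == H :* x, v == H :* y & y * x^-1 \in A]].

Definition cos_aut (G H A : {set gT}) (phi : {perm {set gT}}) : Prop :=
  phi @: cos_vertices G H = cos_vertices G H /\
  {in cos_vertices G H &, forall u v, cos_adj G H A (phi u) (phi v) = cos_adj G H A u v}.

Definition cos_aut_stab (G H A : {set gT}) (phi : {perm {set gT}}) : Prop :=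
  cos_aut G H A phi /\ phi H = H.

Definition vertex_transitive_cos (G H A : {set gT}) : Prop :=
  {in cos_vertices G H &, forall u v, exists phi, cos_aut G H A phi /\ phi u = v}.

Definition union_double_cosets (H A : {set gT}) : Prop := H * A * H = A.

End CosetGraph.

From mathcomp Require Import all_boot all_fingroup.
Set Implicit Arguments.
Unset Strict Implicit.
Unset Printing Implicit Defensive.
Local Open Scope group_scope.

(* For g in G the right translation Hx |-> Hxg is an automorphism of
   Cos(G,H,A).  If phi fixes H and maps Hx to Hg, then conjugating phi by the
   translations by x and g^-1 gives another automorphism fixing H; it fixes the
   set {Hb | b in B}, which says that phi maps Hbx to Hb'g for some b' in B.
   Since <B> is finite, every element of <B> is a product of elements of B,
   and induction on the length of such a product shows that phi maps every
   Hy, y in <B>, to some Hg, g in <B>. *)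

Lemma perm_imset_sub_eq (T : finType) (phi : {perm T}) (S : {set T}) :
  phi @: S \subset S -> phi @: S = S.
Proof.
by move=> sub; apply/eqP; rewrite eqEcard sub (card_imset _ (@perm_inj _ phi)) leqnn.
Qed.

Section CosetGraphTranslations.
Variable gT : finGroupType.
Implicit Types (G H : {group gT}) (A B X Y : {set gT}).

Lemma cos_adj_rcoset G H A g X Y : g \in G ->
  cos_adj G H A (X :* g) (Y :* g) = cos_adj G H A X Y.
Proof.
suff adjR : forall h U V,
    h \in G -> cos_adj G H A U V -> cos_adj G H A (U :* h) (V :* h).
  move=> Gg; apply/idP/idP; last exact: adjR.
  by move/(adjR g^-1 _ _ (groupVr Gg)); rewrite -!rcosetM !mulgV !rcoset1.
move=> h U V Gh /existsP[x /andP[Gx /existsP[y /andP[Gy /and3P[/eqP-> /eqP-> Ayx]]]]].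
apply/existsP; exists (x * h); rewrite groupM //=.
apply/existsP; exists (y * h); rewrite groupM // !rcosetM !eqxx /=.
by rewrite invMg mulgA mulgK.
Qed.

Definition rtrans (g : gT) : {perm {set gT}} := perm (@rcoset_inj gT g).

Lemma rtransE g X : rtrans g X = X :* g.
Proof. by rewrite permE. Qed.

Lemma cos_aut_rtrans G H A g : g \in G -> cos_aut G H A (rtrans g).
Proof.
move=> Gg; split=> [|u v _ _]; last by rewrite !rtransE cos_adj_rcoset.
apply/perm_imset_sub_eq/subsetP=> _ /imsetP[_ /rcosetsP[x Gx ->] ->].
by rewrite rtransE -rcosetM; apply/rcosetsP; exists (x * g); rewrite ?groupM.
Qed.

Lemma cos_aut_mul G H A p q :
  cos_aut G H A p -> cos_aut G H A q -> cos_aut G H A (p * q).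
Proof.
move=> [Vp adjp] [Vq adjq].
have Vpq : (p * q) @: cos_vertices G H = q @: (p @: cos_vertices G H).
  by rewrite -imset_comp; apply: eq_imset => u; rewrite permM.
split=> [|u v Vu Vv]; first by rewrite Vpq Vp Vq.
by rewrite !permM adjq ?adjp // -Vp imset_f.
Qed.

Lemma cos_aut_stab_rtrans_conj G H A phi x g :
  cos_aut_stab G H A phi -> x \in G -> g \in G -> phi (H :* x) = H :* g ->
  cos_aut_stab G H A (rtrans x * phi * rtrans g^-1).
Proof.
move=> [autphi _] Gx Gg phiHx; split.
  by do 2?apply: cos_aut_mul => //; apply: cos_aut_rtrans; rewrite ?groupV.
by rewrite !permM !rtransE phiHx -rcosetM mulgV rcoset1.
Qed.

Lemma gen_mull_ind B (P : gT -> Prop) :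
  P 1 -> (forall b y, b \in B -> y \in <<B>> -> P y -> P (b * y)) ->
  forall y, y \in <<B>> -> P y.
Proof.
move=> P1 PbB y /gen_prodgP[n [c Bc ->]] {y}.
elim: n c Bc => [|n IHn] c Bc; first by rewrite big_ord0.
rewrite big_ord_recl; apply: PbB => //; last exact: IHn.
by apply: group_prod => i _; apply: mem_gen.
Qed.

Section StableGenerators.
Variables (G H : {group gT}) (A B : {set gT}).
Hypothesis sBG : B \subset G.
Hypothesis stab_B : forall phi, cos_aut_stab G H A phi ->
  phi @: [set H :* b | b in B] = [set H :* b | b in B].

Lemma cos_aut_stab_mull phi x g b :
  cos_aut_stab G H A phi -> x \in G -> g \in G -> b \in B ->
  phi (H :* x) = H :* g ->
  exists2 b', b' \in B & phi (H :* (b * x)) = H :* (b' * g).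
Proof.
move=> stab_phi Gx Gg Bb phiHx.
have stab_psi := cos_aut_stab_rtrans_conj stab_phi Gx Gg phiHx.
have /imsetP[b' Bb' psiHb] : (rtrans x * phi * rtrans g^-1) (H :* b) \in
    [set H :* b | b in B].
  by rewrite -(stab_B stab_psi); apply/imset_f/imset_f.
exists b' => //; rewrite (rcosetM _ b') -psiHb !permM !rtransE.
by rewrite -!rcosetM mulVg mulg1.
Qed.

Lemma cos_aut_stab_gen phi : cos_aut_stab G H A phi ->
  phi @: [set H :* y | y in <<B>>] = [set H :* y | y in <<B>>].
Proof.
move=> stab_phi; have sgBG : <<B>> \subset G by rewrite gen_subG.
have phi_gen : {in <<B>>, forall y, exists2 g, g \in <<B>> & phi (H :* y) = H :* g}.
  apply: gen_mull_ind => [|b {}y Bb By [g Bg phiHy]].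
    by exists 1; rewrite ?group1 // rcoset1 stab_phi.2.
  have [b' Bb' ->] := cos_aut_stab_mull stab_phi (subsetP sgBG y By)
    (subsetP sgBG g Bg) Bb phiHy.
  by exists (b' * g); rewrite // groupM // mem_gen.
apply/perm_imset_sub_eq/subsetP => _ /imsetP[_ /imsetP[y By ->] ->].
by have [g Bg ->] := phi_gen y By; apply: imset_f.
Qed.

End StableGenerators.
End CosetGraphTranslations.

Theorem lemma3p4 (gT : finGroupType) (G H : {group gT}) (A B : {set gT}) :
  H \subset G -> A \subset G -> union_double_cosets H A -> A^-1 = A ->
  vertex_transitive_cos G H A ->
  B \subset A ->
  (forall phi, cos_aut_stab G H A phi ->
     phi @: [set H :* x | x in B] = [set H :* x | x in B]) ->
  forall phi, cos_aut_stab G H A phi ->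
     phi @: [set H :* x | x in <<B>>] = [set H :* x | x in <<B>>].
Proof.
move=> _ sAG _ _ _ sBA stab_B.
exact: cos_aut_stab_gen (subset_trans sBA sAG) stab_B.
Qed.
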